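(* For a function $F(s,r,\boldsymbol t,\bar{\boldsymbol t})$, the system of six dispersionless Hirota equations (dH1a),(dH1b),(dH2a),(dH2b),(dH3a),(dH3b) is equivalent to the system consisting of (dH1b),(dH2b),(dH3b) together with (dH1c),(dH2c),(dH3c).
   Context: $F=F(s,r,\boldsymbol t,\bar{\boldsymbol t})$ is a smooth function of continuous variables $s,r$ and $\boldsymbol t=(t_1,t_2,\dots)$, $\bar{\boldsymbol t}=(\bar t_1,\bar t_2,\dots)$. $D(z)=\sum_{n\ge1}\frac{z^{-n}}{n}\partial_{t_n}$, $\bar D(z)=\sum_{n\ge1}\frac{z^n}{n}\partial_{\bar t_n}$; identities are understood as formal series in $\lambda^{-1},\mu^{-1}$ (when $D$ appears) and $\lambda,\mu$ (when $\bar D$ appears), for parameters $\lambda\ne\mu$. The equations are: (dH1a) $e^{D(\lambda)D(\mu)F}=\frac{\lambda e^{-\partial_rD(\lambda)F}-\mu e^{-\partial_rD(\mu)F}}{\lambda-\mu}+\frac1{\lambda\mu}e^{(\partial_s+D(\lambda))(\partial_s+D(\mu))F+\partial_r\partial_sF}$; (dH1b) $e^{D(\lambda)D(\mu)F}=\frac{\lambda e^{-\partial_sD(\lambda)F}-\mu e^{-\partial_sD(\mu)F}}{\lambda-\mu}+\frac1{\lambda\mu}e^{(\partial_r+D(\lambda))(\partial_r+D(\mu))F+\partial_r\partial_sF}$; (dH2a) $e^{\bar D(\lambda)\bar D(\mu)F}=\frac{\lambda^{-1}e^{-\partial_r\bar D(\lambda)F}-\mu^{-1}e^{-\partial_r\bar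 D(\mu)F}}{\lambda^{-1}-\mu^{-1}}+\lambda\mu\,e^{(-\partial_s+\bar D(\lambda))(-\partial_s+\bar D(\mu))F-\partial_r\partial_sF}$; (dH2b) $e^{\bar D(\lambda)\bar D(\mu)F}=\frac{\lambda^{-1}e^{\partial_s\bar D(\lambda)F}-\mu^{-1}e^{\partial_s\bar D(\mu)F}}{\lambda^{-1}-\mu^{-1}}+\lambda\mu\,e^{(\partial_r+\bar D(\lambda))(\partial_r+\bar D(\mu))F-\partial_r\partial_sF}$; (dH3a) $e^{D(\lambda)\bar D(\mu)F}=e^{-(\partial_r+\partial_s)\bar D(\mu)F}-\lambda\mu\,e^{-(\partial_rD(\lambda)+\partial_s\bar D(\mu)+\partial_r\partial_s)F}+\lambda\mu\,e^{(-\partial_s+D(\lambda))(-\partial_s+\bar D(\mu))F-(\partial_r+\partial_s)\partial_sF}$; (dH3b) $e^{D(\lambda)\bar D(\mu)F}=1-\frac{\mu}{\lambda}e^{\partial_s(\partial_s+D(\lambda)-\bar D(\mu))F}+\frac{\mu}{\lambda}e^{(\partial_r+D(\lambda))(\partial_r+\bar D(\mu))F}$; (dH1c) $\lambda(e^{-\partial_sD(\lambda)F}-e^{-\partial_rD(\lambda)F})+\lambda^{-1}(e^{\partial_s(\partial_r+\partial_s+D(\lambda))F}-e^{\partial_r(\partial_r+\partial_s+D(\lambda))F})=(\partial_r-\partial_s)\partial_{t_1}F$; (dH2c) $\lambda^{-1}(e^{\partial_s\bar D(\lambda)F}-e^{-\partial_r\bar D(\lambda)F})+\lambda(e^{-\partial_s(\partial_r-\partial_s+\bar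 D(\lambda))F}-e^{\partial_r(\partial_r-\partial_s+\bar D(\lambda))F})=(\partial_r+\partial_s)\partial_{\bar t_1}F$; (dH3c) $(\partial_r+\partial_s)\partial_{\bar t_1}F=e^{-\partial_r\partial_sF}(\partial_r-\partial_s)\partial_{t_1}F$. *)

From Stdlib Require Import Reals Permutation List Factorial.
Open Scope R_scope.

(* Independent variables: s, r, t_{n+1} (vt n), tbar_{n+1} (vtb n). *)
Inductive var : Type := vs | vr | vt (n : nat) | vtb (n : nat).

Definition var_eq_dec (a b : var) : {a = b} + {a <> b}.
Proof. decide equality; apply PeanoNat.Nat.eq_dec. Defined.

Definition point := var -> R.

Definition upd (x : point) (v : var) (h : R) : point :=
  fun w => if var_eq_dec w v then h else x w.

(* D is the family of all iterated partial derivatives of F: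
   D [] = F, D (v :: l) = d/d v (D l), every iterated partial derivative
   exists everywhere, and (as for any smooth function, by Schwarz)
   it does not depend on the order of differentiation. *)
Definition is_derivative_family (F : point -> R) (D : list var -> point -> R) : Prop :=
  D nil = F /\
  (forall (l : list var) (v : var) (x : point),
      derivable_pt_lim (fun h => D l (upd x v h)) (x v) (D (v :: l) x)) /\
  (forall l1 l2 : list var, Permutation l1 l2 -> D l1 = D l2).

(* Formal power series in two variables X, Y: coefficient of X^m Y^n. *)
Definition ser := nat -> nat -> R.

Definition sadd (f g : ser) : ser := fun m n => f m n + g m n.
Definition sopp (f : ser) : ser := fun m n => - f m n.
Definition ssub (f g : ser) : ser := fun m n => f m n - g m n.
Definition smul (f g : ser) : ser :=
  fun m n => sum_f_R0 (fun i => sum_f_R0 (fun k => f i k * g (m - i)%nat (n - k)%nat) n) m.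
Definition sconst (c : R) : ser :=
  fun m n => match m, n with O, O => c | _, _ => 0 end.
Definition sone : ser := sconst 1.
Definition sX : ser := fun m n => match m, n with 1%nat, O => 1 | _, _ => 0 end.
Definition sY : ser := fun m n => match m, n with O, 1%nat => 1 | _, _ => 0 end.

Fixpoint spow (f : ser) (k : nat) : ser :=
  match k with O => sone | S k' => smul f (spow f k') end.

Definition snocst (f : ser) : ser :=
  fun m n => match m, n with O, O => 0 | _, _ => f m n end.

(* Formal exponential: e^{c + g} = e^c * sum_k g^k / k!, (g without constant
   term; only k <= m+n contributes to the coefficient of X^m Y^n). *)
Definition sexp (f : ser) : ser :=
  fun m n => exp (f O O) *
    sum_f_R0 (fun k => spow (snocst f) k m n / INR (fact k)) (m + n).

Definition inX (a : nat -> R) : ser := fun m n => match n with O => a m | _ => 0 end.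
Definition inY (a : nat -> R) : ser := fun m n => match m with O => a n | _ => 0 end.

(* Jets: j l = (iterated partial derivative along l of F) at a point. *)
Definition jet := list var -> R.

(* Coefficients of D(z) applied to (d_l F):  sum_{n>=1} z^{-n}/n d_{t_n} d_l F
   (resp. Dbar with tbar and z^n).  fam k = variable number k+1. *)
Definition Dop1 (j : jet) (fam : nat -> var) (l : list var) : nat -> R :=
  fun m => match m with O => 0 | S k => j (fam k :: l) / INR (S k) end.

Definition Dop2 (j : jet) (famx famy : nat -> var) : ser :=
  fun m n => match m, n with
             | S a, S b => j (famx a :: famy b :: nil) / (INR (S a) * INR (S b))
             | _, _ => 0 end.

Definition DX (j : jet) (fam : nat -> var) (l : list var) : ser := inX (Dop1 j fam l).
Definition DY (j : jet) (fam : nat -> var) (l : list var) : ser := inY (Dop1 j fam l).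
Definition C (j : jet) (l : list var) : ser := sconst (j l).

(* Conventions: in (dH1a,b) X = lambda^{-1}, Y = mu^{-1}; in (dH2a,b) X = lambda,
   Y = mu; in (dH3a),(dH3b) X = lambda^{-1}, Y = mu; in (dH1c) X = lambda^{-1};
   in (dH2c) X = lambda.  Denominators (lambda - mu), etc., are cleared by
   multiplying with a nonzero polynomial. *)

(* (dH1a) times (Y-X) *)
Definition dH1a (j : jet) : Prop :=
  smul (ssub sY sX) (sexp (Dop2 j vt vt)) =
  sadd (ssub (smul sY (sexp (sopp (DX j vt (vr :: nil)))))
             (smul sX (sexp (sopp (DY j vt (vr :: nil))))))
       (smul (smul sX sY) (smul (ssub sY sX)
          (sexp (sadd (sadd (sadd (sadd (C j (vs :: vs :: nil)) (DX j vt (vs :: nil)))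
                                  (DY j vt (vs :: nil)))
                            (Dop2 j vt vt))
                      (C j (vr :: vs :: nil)))))).

Definition dH1b (j : jet) : Prop :=
  smul (ssub sY sX) (sexp (Dop2 j vt vt)) =
  sadd (ssub (smul sY (sexp (sopp (DX j vt (vs :: nil)))))
             (smul sX (sexp (sopp (DY j vt (vs :: nil))))))
       (smul (smul sX sY) (smul (ssub sY sX)
          (sexp (sadd (sadd (sadd (sadd (C j (vr :: vr :: nil)) (DX j vt (vr :: nil)))
                                  (DY j vt (vr :: nil)))
                            (Dop2 j vt vt))
                      (C j (vr :: vs :: nil)))))).

Definition dH2a (j : jet) : Prop :=
  smul (ssub sY sX) (sexp (Dop2 j vtb vtb)) =
  sadd (ssub (smul sY (sexp (sopp (DX j vtb (vr :: nil)))))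
             (smul sX (sexp (sopp (DY j vtb (vr :: nil))))))
       (smul (smul sX sY) (smul (ssub sY sX)
          (sexp (ssub (sadd (ssub (ssub (C j (vs :: vs :: nil)) (DX j vtb (vs :: nil)))
                                  (DY j vtb (vs :: nil)))
                            (Dop2 j vtb vtb))
                      (C j (vr :: vs :: nil)))))).

Definition dH2b (j : jet) : Prop :=
  smul (ssub sY sX) (sexp (Dop2 j vtb vtb)) =
  sadd (ssub (smul sY (sexp (DX j vtb (vs :: nil))))
             (smul sX (sexp (DY j vtb (vs :: nil)))))
       (smul (smul sX sY) (smul (ssub sY sX)
          (sexp (ssub (sadd (sadd (sadd (C j (vr :: vr :: nil)) (DX j vtb (vr :: nil)))
                                  (DY j vtb (vr :: nil)))
                            (Dop2 j vtb vtb))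
                      (C j (vr :: vs :: nil)))))).

(* (dH3a) times X  (lambda mu = Y/X) *)
Definition dH3a (j : jet) : Prop :=
  smul sX (sexp (Dop2 j vt vtb)) =
  sadd (ssub (smul sX (sexp (sopp (sadd (DY j vtb (vr :: nil)) (DY j vtb (vs :: nil))))))
             (smul sY (sexp (sopp (sadd (sadd (DX j vt (vr :: nil)) (DY j vtb (vs :: nil)))
                                        (C j (vr :: vs :: nil)))))))
       (smul sY (sexp
          (ssub (sadd (ssub (ssub (C j (vs :: vs :: nil)) (DX j vt (vs :: nil)))
                            (DY j vtb (vs :: nil)))
                      (Dop2 j vt vtb))
                (sadd (C j (vr :: vs :: nil)) (C j (vs :: vs :: nil)))))).

(* (dH3b)  (mu/lambda = X Y) *)
Definition dH3b (j : jet) : Prop :=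
  sexp (Dop2 j vt vtb) =
  sadd (ssub sone (smul (smul sX sY)
                    (sexp (ssub (sadd (C j (vs :: vs :: nil)) (DX j vt (vs :: nil)))
                                (DY j vtb (vs :: nil))))))
       (smul (smul sX sY)
          (sexp (sadd (sadd (sadd (C j (vr :: vr :: nil)) (DX j vt (vr :: nil)))
                            (DY j vtb (vr :: nil)))
                      (Dop2 j vt vtb)))).

(* (dH1c) times X *)
Definition dH1c (j : jet) : Prop :=
  sadd (ssub (sexp (sopp (DX j vt (vs :: nil)))) (sexp (sopp (DX j vt (vr :: nil)))))
       (smul (smul sX sX)
          (ssub (sexp (sadd (sadd (C j (vs :: vr :: nil)) (C j (vs :: vs :: nil)))
                            (DX j vt (vs :: nil))))
                (sexp (sadd (sadd (C j (vr :: vr :: nil)) (C j (vr :: vs :: nil)))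
                            (DX j vt (vr :: nil)))))) =
  smul sX (sconst (j (vr :: vt 0 :: nil) - j (vs :: vt 0 :: nil))).

(* (dH2c) times X *)
Definition dH2c (j : jet) : Prop :=
  sadd (ssub (sexp (DX j vtb (vs :: nil))) (sexp (sopp (DX j vtb (vr :: nil)))))
       (smul (smul sX sX)
          (ssub (sexp (sopp (sadd (ssub (C j (vs :: vr :: nil)) (C j (vs :: vs :: nil)))
                                  (DX j vtb (vs :: nil)))))
                (sexp (sadd (ssub (C j (vr :: vr :: nil)) (C j (vr :: vs :: nil)))
                            (DX j vtb (vr :: nil)))))) =
  smul sX (sconst (j (vr :: vtb 0 :: nil) + j (vs :: vtb 0 :: nil))).

Definition dH3c (j : jet) : Prop :=
  j (vr :: vtb 0 :: nil) + j (vs :: vtb 0 :: nil) =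
  exp (- j (vr :: vs :: nil)) * (j (vr :: vt 0 :: nil) - j (vs :: vt 0 :: nil)).

Definition jet_at (D : list var -> point -> R) (x : point) : jet := fun l => D l x.

From Stdlib Require Import Reals Lia Permutation List FunctionalExtensionality Ring Factorial.
Open Scope R_scope.

(* The equivalence holds pointwise, for the
   jet of F at each point, and is a statement about formal power series in two
   variables X, Y with real coefficients.

   1. Power series form a commutative ring: the Cauchy product over any
      commutative semiring is again one, and two-variable series are one-variable
      series over one-variable series.  The formal exponential satisfies
      e^(f+g) = e^f e^g (via the binomial theorem on truncated exponentials).
   2. Cancellation: X, Y and 1 - X E are non-zero-divisors; a series h(X) with
      Y h(X) = X h(Y) is a constant multiple of X.
   3. Pure ring identities: given (dH1b), (dH1a) is equivalent to Y h(X) = X h(Y)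
      for an explicit residual h, i.e. to h = c X, which is (dH1c); likewise for
      (dH2a); and given (dH3b), (dH1c), (dH2c), the equation (dH3a) reduces to
      X Y c2 = X Y e^{-F_rs} c1, which is (dH3c).
   4. Using the symmetry of second derivatives, the three equivalences combine
      to the theorem. *)

Section Convolution.
Variables (K : Type) (K0 K1 : K) (Kadd Kmul : K -> K -> K).
Hypothesis Ksr : semi_ring_theory K0 K1 Kadd Kmul (@eq K).
Add Ring Kring : Ksr.
Local Infix "+" := Kadd.
Local Infix "*" := Kmul.

Fixpoint gsum (F : nat -> K) (N : nat) : K :=
  match N with O => F O | S n => gsum F n + F (S n) end.

Lemma gsum_ext F G N : (forall i, (i <= N)%nat -> F i = G i) -> gsum F N = gsum G N.
Proof.
  induction N as [|N IH]; intros H; simpl; [apply H; lia|].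
  rewrite IH, (H (S N)); auto; intros; apply H; lia.
Qed.

Lemma gsum_add F G N : gsum (fun i => F i + G i) N = gsum F N + gsum G N.
Proof. induction N as [|N IH]; simpl; [reflexivity|]. rewrite IH. ring. Qed.

Lemma gsum_mul_l a F N : a * gsum F N = gsum (fun i => a * F i) N.
Proof. induction N as [|N IH]; simpl; [reflexivity|]. rewrite <- IH. ring. Qed.

Lemma gsum_zero F N : (forall i, (i <= N)%nat -> F i = K0) -> gsum F N = K0.
Proof.
  induction N as [|N IH]; intros H; simpl; [apply H; lia|].
  rewrite IH, H by (lia || (intros; apply H; lia)). ring.
Qed.

Lemma gsum_shift F N : gsum F (S N) = F O + gsum (fun i => F (S i)) N.
Proof.
  induction N as [|N IH]; [reflexivity|].
  change (gsum F (S (S N))) with (gsum F (S N) + F (S (S N))). rewrite IH. simpl. ring.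
Qed.

Lemma gsum_rev F N : gsum F N = gsum (fun i => F (N - i)%nat) N.
Proof.
  revert F; induction N as [|N IH]; intros F; [reflexivity|].
  rewrite gsum_shift, (IH (fun i => F (S i))).
  change (gsum (fun i => F (S N - i)%nat) (S N))
    with (gsum (fun i => F (S N - i)%nat) N + F (S N - S N)%nat).
  rewrite Nat.sub_diag, (gsum_ext (fun i => F (S (N - i))) (fun i => F (S N - i)%nat)); [ring|].
  intros i Hi. f_equal. lia.
Qed.

Lemma gsum_single F N k : (k <= N)%nat ->
  (forall i, (i <= N)%nat -> i <> k -> F i = K0) -> gsum F N = F k.
Proof.
  induction N as [|N IH]; intros Hk H; simpl; [f_equal; lia|].
  destruct (Nat.eq_dec k (S N)) as [->|Hne].
  - rewrite gsum_zero by (intros; apply H; lia). ring.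
  - rewrite IH, (H (S N)) by (lia || (intros; apply H; lia)). ring.
Qed.

Lemma gsum_tri (H : nat -> nat -> K) m :
  gsum (fun i => gsum (fun j => H i j) i) m =
  gsum (fun j => gsum (fun l => H (j + l)%nat j) (m - j)) m.
Proof.
  induction m as [|m IH]; [reflexivity|].
  change (gsum (fun i => gsum (fun j => H i j) i) (S m)) with
    (gsum (fun i => gsum (fun j => H i j) i) m + gsum (fun j => H (S m) j) (S m)).
  change (gsum (fun j => gsum (fun l => H (j + l)%nat j) (S m - j)) (S m)) with
    (gsum (fun j => gsum (fun l => H (j + l)%nat j) (S m - j)) m +
     gsum (fun l => H (S m + l)%nat (S m)) (S m - S m)).
  rewrite IH, Nat.sub_diag.
  change (gsum (fun l => H (S m + l)%nat (S m)) 0) with (H (S m + 0)%nat (S m)).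
  change (gsum (fun j => H (S m) j) (S m)) with (gsum (fun j => H (S m) j) m + H (S m) (S m)).
  rewrite Nat.add_0_r.
  rewrite (gsum_ext (fun j => gsum (fun l => H (j + l)%nat j) (S m - j))
                    (fun j => gsum (fun l => H (j + l)%nat j) (m - j) + H (S m) j)).
  - rewrite gsum_add. change (gsum (H (S m)) m) with (gsum (fun j => H (S m) j) m). ring.
  - intros i Hi. replace (S m - i)%nat with (S (m - i)) by lia. simpl gsum.
    replace (i + S (m - i))%nat with (S m) by lia. reflexivity.
Qed.

Lemma gsum_swap (H : nat -> nat -> K) m n :
  gsum (fun i => gsum (fun k => H i k) n) m = gsum (fun k => gsum (fun i => H i k) m) n.
Proof. induction m as [|m IH]; simpl; [reflexivity|]. rewrite IH, <- gsum_add. reflexivity. Qed.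

Definition conv (a b : nat -> K) (m : nat) : K := gsum (fun i => a i * b (m - i)%nat) m.
Definition cunit (i : nat) : K := match i with O => K1 | _ => K0 end.

Lemma conv_comm a b m : conv a b m = conv b a m.
Proof.
  unfold conv. rewrite gsum_rev. apply gsum_ext; intros i Hi.
  replace (m - (m - i))%nat with i by lia. ring.
Qed.

Lemma conv_assoc a b c m : conv a (conv b c) m = conv (conv a b) c m.
Proof.
  unfold conv.
  rewrite (gsum_ext (fun i => gsum (fun j => a j * b (i - j)%nat) i * c (m - i)%nat)
                    (fun i => gsum (fun j => a j * b (i - j)%nat * c (m - i)%nat) i))
    by (intros; rewrite (SRmul_comm Ksr), gsum_mul_l; apply gsum_ext; intros; ring).
  rewrite (gsum_tri (fun i j => a j * b (i - j)%nat * c (m - i)%nat)).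
  apply gsum_ext; intros j Hj. rewrite gsum_mul_l. apply gsum_ext; intros l Hl.
  replace (j + l - j)%nat with l by lia. replace (m - (j + l))%nat with (m - j - l)%nat by lia.
  ring.
Qed.

Lemma conv_unit b m : conv cunit b m = b m.
Proof.
  unfold conv. rewrite (gsum_single _ m O) by (lia || (intros [|i] _ Hi; [lia|simpl; ring])).
  simpl. rewrite Nat.sub_0_r. ring.
Qed.

Lemma conv_semi_ring :
  semi_ring_theory (fun _ => K0) cunit (fun a b i => a i + b i) conv (@eq (nat -> K)).
Proof.
  constructor; intros; apply functional_extensionality; intro idx.
  - ring.
  - ring.
  - ring.
  - apply conv_unit.
  - unfold conv. apply gsum_zero; intros; ring.
  - apply conv_comm.
  - apply conv_assoc.
  - unfold conv. rewrite <- gsum_add. apply gsum_ext; intros; ring.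
Qed.
End Convolution.
Arguments gsum {K}.
Arguments conv {K}.
Arguments cunit {K}.

Lemma R_semi_ring : semi_ring_theory 0 1 Rplus Rmult (@eq R).
Proof. constructor; intros; ring. Qed.

(* One-variable series over R, and series in two variables as series over those. *)
Definition conv1 : (nat -> R) -> (nat -> R) -> nat -> R := conv Rplus Rmult.
Definition add1 (a b : nat -> R) : nat -> R := fun i => a i + b i.

Lemma gsum_R F N : gsum Rplus F N = sum_f_R0 F N.
Proof. induction N as [|N IH]; simpl; [reflexivity|]. rewrite IH; reflexivity. Qed.

Lemma gsum1_coef (F : nat -> nat -> R) N n : gsum add1 F N n = sum_f_R0 (fun i => F i n) N.
Proof. induction N as [|N IH]; [reflexivity|]. cbn [gsum]. unfold add1 at 1. rewrite IH; reflexivity. Qed.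

Lemma smul_conv (f g : ser) : smul f g = conv add1 conv1 f g.
Proof.
  apply functional_extensionality; intro m; apply functional_extensionality; intro n.
  unfold smul, conv at 1. rewrite gsum1_coef. apply sum_eq; intros i _.
  unfold conv1, conv. symmetry. apply gsum_R.
Qed.

Definition szero : ser := fun _ _ => 0.

Ltac fext := let m := fresh "m" in let n := fresh "n" in
  apply functional_extensionality; intro m; apply functional_extensionality; intro n.

Lemma ser_semi_ring : semi_ring_theory szero sone sadd smul (@eq ser).
Proof.
  assert (Hsr := conv_semi_ring _ _ _ _ _ (conv_semi_ring _ _ _ _ _ R_semi_ring)).
  assert (Hone : sone = cunit (fun _ => 0) (cunit 0 1)).
  { fext. destruct m, n; reflexivity. }
  destruct Hsr; constructor; intros; rewrite ?smul_conv, ?Hone;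
    first [fext; unfold sadd, szero; ring | eauto].
Qed.

Lemma ser_ring : ring_theory szero sone sadd smul ssub sopp (@eq ser).
Proof.
  destruct ser_semi_ring; constructor; auto; intros; fext; unfold ssub, sadd, sopp, szero; ring.
Qed.

Add Ring serRing : ser_ring.

Local Infix "*s" := smul (at level 40, left associativity).
Local Infix "+s" := sadd (at level 50, left associativity).
Local Infix "-s" := ssub (at level 50, left associativity).

Lemma sum_single_R F N k : (k <= N)%nat ->
  (forall i, (i <= N)%nat -> i <> k -> F i = 0) -> sum_f_R0 F N = F k.
Proof. rewrite <- gsum_R. apply (gsum_single _ _ _ _ _ R_semi_ring). Qed.

Lemma sum_zero_R F N : (forall i, (i <= N)%nat -> F i = 0) -> sum_f_R0 F N = 0.
Proof. rewrite <- gsum_R. apply (gsum_zero _ _ _ _ _ R_semi_ring). Qed.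

Lemma sum_mul_R c F N : c * sum_f_R0 F N = sum_f_R0 (fun i => c * F i) N.
Proof. rewrite <- !gsum_R. apply (gsum_mul_l _ _ _ _ _ R_semi_ring). Qed.

Lemma smul_const_l c f m n : (sconst c *s f) m n = c * f m n.
Proof.
  unfold smul.
  rewrite (sum_single_R _ m O) by
    (lia || (intros [|i] _ Hi; [lia|apply sum_zero_R; intros; simpl; ring])).
  rewrite (sum_single_R _ n O) by (lia || (intros [|k] _ Hk; [lia|simpl; ring])).
  simpl. rewrite !Nat.sub_0_r. reflexivity.
Qed.

Lemma smul_X_l f m n : (sX *s f) m n = match m with O => 0 | S m' => f m' n end.
Proof.
  unfold smul. destruct m as [|m'].
  - apply sum_zero_R. intros i Hi. apply sum_zero_R; intros k _.
    replace i with O by lia. simpl. ring.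
  - rewrite (sum_single_R _ (S m') 1%nat) by (lia || (intros i _ Hi;
      apply sum_zero_R; intros k _; destruct i as [|[|i]]; [simpl; ring|lia|simpl; ring])).
    rewrite (sum_single_R _ n O) by (lia || (intros [|k] _ Hk; [lia|simpl; ring])).
    simpl. rewrite !Nat.sub_0_r. ring.
Qed.

Lemma smul_Y_l f m n : (sY *s f) m n = match n with O => 0 | S n' => f m n' end.
Proof.
  unfold smul.
  rewrite (sum_single_R _ m O) by
    (lia || (intros [|i] _ Hi; [lia|apply sum_zero_R; intros; simpl; ring])).
  rewrite Nat.sub_0_r. destruct n as [|n'].
  - apply sum_zero_R. intros k Hk. replace k with O by lia. simpl. ring.
  - rewrite (sum_single_R _ (S n') 1%nat) by (lia || (intros k _ Hk;
      destruct k as [|[|k]]; [simpl; ring|lia|simpl; ring])).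
    simpl. rewrite Nat.sub_0_r. ring.
Qed.

Lemma sconst_mul a b : sconst (a * b) = sconst a *s sconst b.
Proof. fext. rewrite smul_const_l. destruct m, n; simpl; ring. Qed.

Lemma sconst_add a b : sconst (a + b) = sconst a +s sconst b.
Proof. fext. unfold sadd. destruct m, n; simpl; ring. Qed.

Lemma sconst_opp a : sconst (- a) = sopp (sconst a).
Proof. fext. unfold sopp. destruct m, n; simpl; ring. Qed.

Lemma szero_const : szero = sconst 0.
Proof. fext. destruct m, n; reflexivity. Qed.

Lemma cancel_X f g : sX *s f = sX *s g -> f = g.
Proof.
  intros H. fext. assert (H1 := f_equal (fun h => h (S m) n) H). simpl in H1.
  rewrite !smul_X_l in H1. exact H1.
Qed.

Lemma cancel_Y f g : sY *s f = sY *s g -> f = g.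
Proof.
  intros H. fext. assert (H1 := f_equal (fun h => h m (S n)) H). simpl in H1.
  rewrite !smul_Y_l in H1. exact H1.
Qed.

(* [1 - X E] is a non-zero-divisor: if (1 - X E) D = 0 then D = X (E D), and
   induction on the X-degree shows D = 0. *)
Lemma cancel_1mX E A B : (sone -s sX *s E) *s A = (sone -s sX *s E) *s B -> A = B.
Proof.
  intros H.
  assert (HD : A -s B = sX *s (E *s (A -s B))).
  { transitivity ((sone -s sX *s E) *s A -s (sone -s sX *s E) *s B +s sX *s (E *s (A -s B)));
      [ring|]. rewrite H. ring. }
  assert (H0 : A -s B = szero).
  { fext. revert n. induction m as [m IH] using (well_founded_induction Wf_nat.lt_wf). intro n.
    rewrite HD, smul_X_l. destruct m as [|m']; [reflexivity|].
    unfold smul. apply sum_zero_R; intros i Hi. apply sum_zero_R; intros k Hk.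
    rewrite IH by lia. unfold szero. ring. }
  transitivity ((A -s B) +s B); [ring|]. rewrite H0. ring.
Qed.

Definition ssum (F : nat -> ser) (N : nat) : ser := gsum sadd F N.

Lemma ssum_coef F N m n : ssum F N m n = sum_f_R0 (fun k => F k m n) N.
Proof.
  induction N as [|N IH]; [reflexivity|]. unfold ssum in *. cbn [gsum].
  unfold sadd at 1. rewrite IH. reflexivity.
Qed.

Lemma ssum_ext F G N : (forall i, (i <= N)%nat -> F i = G i) -> ssum F N = ssum G N.
Proof. apply gsum_ext. Qed.

Lemma ssum_add F G N : ssum (fun i => F i +s G i) N = ssum F N +s ssum G N.
Proof. apply (gsum_add _ _ _ _ _ ser_semi_ring). Qed.

Lemma ssum_smul_l a F N : a *s ssum F N = ssum (fun i => a *s F i) N.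
Proof. apply (gsum_mul_l _ _ _ _ _ ser_semi_ring). Qed.

Lemma ssum_smul_r a F N : ssum F N *s a = ssum (fun i => F i *s a) N.
Proof.
  transitivity (a *s ssum F N); [ring|]. rewrite ssum_smul_l. apply ssum_ext; intros; ring.
Qed.

Lemma ssum_shift F N : ssum F (S N) = F O +s ssum (fun i => F (S i)) N.
Proof. apply (gsum_shift _ _ _ _ _ ser_semi_ring). Qed.

Definition sc (c : R) (f : ser) : ser := sconst c *s f.
Definition expterm (g : ser) (k : nat) : ser := sc (/ INR (fact k)) (spow g k).

Lemma INR_fact_neq_0 k : INR (fact k) <> 0.
Proof. apply not_0_INR, fact_neq_0. Qed.

Lemma sc_add a b f : sc a f +s sc b f = sc (a + b) f.
Proof. unfold sc. rewrite sconst_add. ring. Qed.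

Lemma sc_1 f : sc 1 f = f.
Proof. unfold sc. change (sconst 1) with sone. ring. Qed.

Lemma sc_0 f : sc 0 f = szero.
Proof. unfold sc. rewrite <- szero_const. ring. Qed.

Lemma expterm_succ g i : g *s expterm g i = sc (INR (S i)) (expterm g (S i)).
Proof.
  unfold expterm, sc. simpl spow.
  transitivity (sconst (INR (S i) * / INR (fact (S i))) *s (g *s spow g i)).
  - transitivity (sconst (/ INR (fact i)) *s (g *s spow g i)); [ring|].
    do 2 f_equal. rewrite fact_simpl, mult_INR. field.
    split; [apply INR_fact_neq_0 | apply not_0_INR; lia].
  - rewrite sconst_mul. ring.
Qed.

Lemma expterm_binomial g h k :
  expterm (g +s h) k = ssum (fun i => expterm g i *s expterm h (k - i)) k.
Proof.
  induction k as [|k IH].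
  - unfold expterm. simpl. replace (/ 1) with 1 by field. rewrite !sc_1. ring.
  - assert (Hstep : expterm (g +s h) (S k) = sc (/ INR (S k)) ((g +s h) *s expterm (g +s h) k)).
    { unfold expterm, sc. simpl spow. rewrite fact_simpl, mult_INR, Rinv_mult, sconst_mul. ring. }
    assert (Hsplit : (g +s h) *s ssum (fun i => expterm g i *s expterm h (k - i)) k =
       ssum (fun i => sc (INR i) (expterm g i *s expterm h (S k - i))) (S k) +s
       ssum (fun i => sc (INR (S k - i)) (expterm g i *s expterm h (S k - i))) (S k)).
    { rewrite ssum_smul_l.
      rewrite (ssum_ext _ (fun i => g *s expterm g i *s expterm h (k - i) +s
                                    expterm g i *s (h *s expterm h (k - i)))) by (intros; ring).
      rewrite ssum_add. f_equal.
      - rewrite ssum_shift. simpl INR at 1. rewrite sc_0.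
        rewrite (ssum_ext _ (fun i => sc (INR (S i)) (expterm g (S i) *s expterm h (S k - S i))));
          [ring|].
        intros i Hi. rewrite expterm_succ. unfold sc.
        replace (S k - S i)%nat with (k - i)%nat by lia. ring.
      - cbn [ssum gsum]. fold (ssum (fun i => sc (INR (S k - i)) (expterm g i *s expterm h (S k - i))) k).
        rewrite Nat.sub_diag. simpl INR at 2. rewrite sc_0.
        rewrite (ssum_ext _ (fun i => sc (INR (S k - i)) (expterm g i *s expterm h (S k - i))));
          [ring|].
        intros i Hi. rewrite expterm_succ. unfold sc.
        replace (S k - i)%nat with (S (k - i)) by lia. ring. }
    rewrite Hstep, IH, Hsplit, <- ssum_add.
    rewrite (ssum_ext _ (fun i => sc (INR (S k)) (expterm g i *s expterm h (S k - i)))).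
    2:{ intros i Hi. rewrite sc_add. f_equal. rewrite <- plus_INR. f_equal. lia. }
    unfold sc at 1. rewrite ssum_smul_l. apply ssum_ext; intros i Hi. unfold sc.
    transitivity (sconst (/ INR (S k)) *s sconst (INR (S k)) *s (expterm g i *s expterm h (S k - i)));
      [ring|].
    rewrite <- sconst_mul, Rinv_l by (apply not_0_INR; lia). change (sconst 1) with sone. ring.
Qed.

Definition vanishes_below (N : nat) (f : ser) : Prop := forall m n, (m + n < N)%nat -> f m n = 0.

Lemma vanishes_below_mul a b f g :
  vanishes_below a f -> vanishes_below b g -> vanishes_below (a + b) (f *s g).
Proof.
  intros Hf Hg m n H. unfold smul. apply sum_zero_R; intros i Hi. apply sum_zero_R; intros k Hk.
  destruct (Compare_dec.lt_dec (i + k) a).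
  - rewrite Hf by lia. ring.
  - rewrite (Hg (m - i)%nat (n - k)%nat) by lia. ring.
Qed.

Lemma vanishes_below_expterm g k : vanishes_below 1 g -> vanishes_below k (expterm g k).
Proof.
  intros Hg. unfold expterm, sc. replace k with (0 + k)%nat at 1 by lia.
  apply vanishes_below_mul; [intros m n H; lia|].
  induction k as [|k IH]; [intros m n H; lia|].
  apply (vanishes_below_mul 1 k); auto.
Qed.

Lemma vanishes_below_snocst f : vanishes_below 1 (snocst f).
Proof. intros [|m] [|n] H; try lia. reflexivity. Qed.

Lemma sum_trunc F M N : (M <= N)%nat -> (forall k, (M < k <= N)%nat -> F k = 0) ->
  sum_f_R0 F N = sum_f_R0 F M.
Proof.
  induction N as [|N IH]; intros H1 H2.
  - replace M with O by lia. reflexivity.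
  - destruct (Nat.eq_dec M (S N)) as [->|Hne]; [reflexivity|].
    simpl. rewrite IH, (H2 (S N)) by (lia || (intros; apply H2; lia)). ring.
Qed.

Definition exp_partial (N : nat) (g : ser) : ser := ssum (expterm g) N.

Lemma sexp_partial f N m n : (m + n <= N)%nat ->
  sexp f m n = exp (f O O) * exp_partial N (snocst f) m n.
Proof.
  intros H. unfold sexp, exp_partial. f_equal. rewrite ssum_coef, (sum_trunc _ (m + n) N H).
  - apply sum_eq; intros. unfold expterm, sc. rewrite smul_const_l. unfold Rdiv. ring.
  - intros k Hk. rewrite (vanishes_below_expterm _ k) by (apply vanishes_below_snocst || lia).
    reflexivity.
Qed.

Lemma exp_partial_add g h N m n : vanishes_below 1 g -> vanishes_below 1 h -> (m + n <= N)%nat ->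
  exp_partial N (g +s h) m n = (exp_partial N g *s exp_partial N h) m n.
Proof.
  intros Hg Hh HN. unfold exp_partial.
  rewrite (ssum_ext _ (fun k => ssum (fun i => expterm g i *s expterm h (k - i)) k))
    by (intros; apply expterm_binomial).
  unfold ssum at 1. rewrite (gsum_tri _ _ _ _ _ ser_semi_ring (fun k i => expterm g i *s expterm h (k - i))).
  fold (ssum (fun j => ssum (fun l => expterm g j *s expterm h (j + l - j)) (N - j)) N).
  rewrite ssum_smul_r.
  rewrite (ssum_ext (fun i => expterm g i *s ssum (expterm h) N)
                    (fun i => ssum (fun l => expterm g i *s expterm h l) N))
    by (intros; apply ssum_smul_l).
  rewrite !ssum_coef. apply sum_eq; intros j Hj. rewrite !ssum_coef.
  rewrite (sum_eq (fun k => (expterm g j *s expterm h (j + k - j)) m n)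
                  (fun k => (expterm g j *s expterm h k) m n))
    by (intros; replace (j + i - j)%nat with i by lia; reflexivity).
  symmetry. apply sum_trunc; [lia|].
  intros l Hl. apply (vanishes_below_mul j l); [apply vanishes_below_expterm; auto ..|lia].
Qed.

Lemma snocst_add f g : snocst (f +s g) = snocst f +s snocst g.
Proof. fext. unfold sadd. destruct m, n; simpl; try ring; reflexivity. Qed.

Lemma sexp_add f g : sexp (f +s g) = sexp f *s sexp g.
Proof.
  fext. rewrite (sexp_partial _ (m + n)), snocst_add, exp_partial_add
    by (apply vanishes_below_snocst || lia).
  unfold sadd at 1. rewrite exp_plus.
  unfold smul. rewrite !sum_mul_R. apply sum_eq; intros i Hi.
  rewrite !sum_mul_R. apply sum_eq; intros k Hk.
  rewrite (sexp_partial f (m + n)), (sexp_partial g (m + n)) by lia. ring.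
Qed.

Lemma sexp_const c : sexp (sconst c) = sconst (exp c).
Proof.
  assert (Hsn : snocst (sconst c) = szero) by (fext; destruct m, n; reflexivity).
  assert (Hpow : forall k, spow szero (S k) = szero) by (intros; simpl; ring).
  fext. unfold sexp. rewrite Hsn.
  rewrite (sum_single_R _ _ O)
    by (lia || (intros [|i] _ Hi; [lia|rewrite Hpow; unfold szero, Rdiv; ring])).
  simpl. destruct m, n; simpl; field.
Qed.

Lemma sexp_inv f : sexp f *s sexp (sopp f) = sone.
Proof.
  rewrite <- sexp_add. replace (f +s sopp f) with (sconst 0) by (rewrite <- szero_const; ring).
  rewrite sexp_const, exp_0. reflexivity.
Qed.

Lemma sexp_inv' f : sexp (sopp f) *s sexp f = sone.
Proof. rewrite <- (sexp_inv f). ring. Qed.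

Lemma sexp_coef_X f : sexp f 1%nat O = exp (f O O) * f 1%nat O.
Proof. unfold sexp. simpl. f_equal. unfold smul. simpl. field. Qed.

Definition xonly (f : ser) : Prop := forall m n, n <> O -> f m n = 0.

Lemma xonly_mul f g : xonly f -> xonly g -> xonly (f *s g).
Proof.
  intros Hf Hg m n Hn. unfold smul. apply sum_zero_R; intros i Hi. apply sum_zero_R; intros [|k] Hk.
  - rewrite (Hg (m - i)%nat) by lia. ring.
  - rewrite Hf by lia. ring.
Qed.

Lemma xonly_add f g : xonly f -> xonly g -> xonly (f +s g).
Proof. intros Hf Hg m n Hn. unfold sadd. rewrite Hf, Hg by auto. ring. Qed.

Lemma xonly_sub f g : xonly f -> xonly g -> xonly (f -s g).
Proof. intros Hf Hg m n Hn. unfold ssub. rewrite Hf, Hg by auto. ring. Qed.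

Lemma xonly_opp f : xonly f -> xonly (sopp f).
Proof. intros Hf m n Hn. unfold sopp. rewrite Hf by auto. ring. Qed.

Lemma xonly_const c : xonly (sconst c).
Proof. intros [|m] [|n] Hn; try lia; reflexivity. Qed.

Lemma xonly_X : xonly sX.
Proof. intros [|[|m]] [|n] Hn; try lia; reflexivity. Qed.

Lemma xonly_inX a : xonly (inX a).
Proof. intros m [|n] Hn; [lia|reflexivity]. Qed.

Lemma xonly_exp f : xonly f -> xonly (sexp f).
Proof.
  intros Hf.
  assert (Hpow : forall p, xonly (spow (snocst f) p)).
  { intros p; induction p as [|p IH]; [apply xonly_const|apply xonly_mul; auto].
    intros [|a] [|b] Hb; try lia; apply Hf; auto. }
  intros m n Hn. unfold sexp. rewrite sum_zero_R; [ring|]. intros k _.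
  rewrite Hpow by auto. unfold Rdiv; ring.
Qed.

Definition sswap (f : ser) : ser := fun m n => f n m.

Lemma sswap_mul f g : sswap (f *s g) = sswap f *s sswap g.
Proof.
  fext. unfold sswap, smul. rewrite <- !gsum_R.
  rewrite (gsum_ext _ _ _ (fun i => gsum Rplus (fun k => f i k * g (n - i)%nat (m - k)%nat) m))
    by (intros; apply eq_sym, gsum_R).
  rewrite (gsum_swap _ _ _ _ _ R_semi_ring). apply gsum_ext; intros. apply gsum_R.
Qed.

Lemma sswap_pow g k : sswap (spow g k) = spow (sswap g) k.
Proof.
  induction k as [|k IH]; simpl.
  - fext. unfold sswap. destruct m, n; reflexivity.
  - rewrite sswap_mul, IH. reflexivity.
Qed.

Lemma sswap_exp f : sswap (sexp f) = sexp (sswap f).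
Proof.
  assert (Hsn : snocst (sswap f) = sswap (snocst f)) by (fext; unfold sswap; destruct m, n; reflexivity).
  fext. unfold sexp, sswap at 1. rewrite Nat.add_comm, Hsn.
  f_equal. apply sum_eq; intros. rewrite <- sswap_pow. reflexivity.
Qed.

Lemma sswap_add f g : sswap (f +s g) = sswap f +s sswap g.
Proof. reflexivity. Qed.

Lemma sswap_sub f g : sswap (f -s g) = sswap f -s sswap g.
Proof. reflexivity. Qed.

Lemma sswap_opp f : sswap (sopp f) = sopp (sswap f).
Proof. reflexivity. Qed.

Lemma sswap_const c : sswap (sconst c) = sconst c.
Proof. fext. unfold sswap. destruct m, n; reflexivity. Qed.

Lemma sswap_X : sswap sX = sY.
Proof. fext. unfold sswap. destruct m as [|[|]], n as [|[|]]; reflexivity. Qed.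

Lemma sswap_DX j fam l : sswap (DX j fam l) = DY j fam l.
Proof. reflexivity. Qed.

Lemma sswap_C j l : sswap (C j l) = C j l.
Proof. apply sswap_const. Qed.

(* A series h(X) in X alone satisfies Y h(X) = X h(Y) exactly when it is a
   multiple of X: comparing coefficients of X^m Y shows h_m = 0 for m <> 1. *)
Lemma xonly_symmetric_iff h :
  xonly h -> (sY *s h = sX *s sswap h <-> h = sX *s sconst (h 1%nat O)).
Proof.
  intros Hx. split; intros H.
  - fext. rewrite smul_X_l.
    destruct n as [|n].
    2:{ rewrite Hx by lia. destruct m as [|[|m]]; reflexivity. }
    assert (H1 := f_equal (fun f => f m 1%nat) H). simpl in H1.
    rewrite smul_Y_l, smul_X_l in H1. rewrite H1.
    destruct m as [|[|m]]; [reflexivity|reflexivity|]. unfold sswap. apply Hx. lia.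
  - rewrite H, sswap_mul, sswap_X, sswap_const. ring.
Qed.

(* The known
   equation (shape of dH1b) is (Y - X) Q = (Y A - X A') + XY (Y - X) kr V V' Q, the
   other one (shape of dH1a) is the same with A, kr V replaced by B, ks U; the
   primed series are the Y-versions, and A U = B V = 1.  With W = 1 - XY kr V V'
   and Z = 1 - XY ks U U' they read (Y - X) Q W = Y A - X A' and
   (Y - X) Q Z = Y B - X B'; the cross-combination below eliminates Q. *)
Lemma pair_identity (A A' B B' U U' V V' ks kr : ser) :
  A *s U = sone -> A' *s U' = sone -> B *s V = sone -> B' *s V' = sone ->
  (sY *s A -s sX *s A') *s (sone -s sX *s (sY *s ks *s U *s U'))
    -s (sY *s B -s sX *s B') *s (sone -s sX *s (sY *s kr *s V *s V')) =
  sY *s ((A -s B) +s sX *s (sX *s (ks *s U -s kr *s V))) -s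
  sX *s ((A' -s B') +s sY *s (sY *s (ks *s U' -s kr *s V'))).
Proof.
  intros HA HA' HB HB'.
  transitivity (sY *s ((A -s B) +s sX *s (sX *s (ks *s U -s kr *s V))) -s
     sX *s ((A' -s B') +s sY *s (sY *s (ks *s U' -s kr *s V'))) -s
     sX *s sY *s sY *s ks *s U' *s (A *s U -s sone) +s sX *s sX *s sY *s ks *s U *s (A' *s U' -s sone)
     +s sX *s sY *s sY *s kr *s V' *s (B *s V -s sone) -s sX *s sX *s sY *s kr *s V *s (B' *s V' -s sone));
    [ring|].
  rewrite HA, HA', HB, HB'. ring.
Qed.

Lemma pair_equation_iff (Q A A' B B' U U' V V' ks kr : ser) :
  A *s U = sone -> A' *s U' = sone -> B *s V = sone -> B' *s V' = sone ->
  (sY -s sX) *s Q = (sY *s A -s sX *s A') +s sX *s sY *s (sY -s sX) *s (kr *s V *s V' *s Q) ->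
  ((sY -s sX) *s Q = (sY *s B -s sX *s B') +s sX *s sY *s (sY -s sX) *s (ks *s U *s U' *s Q) <->
   sY *s ((A -s B) +s sX *s (sX *s (ks *s U -s kr *s V))) =
   sX *s ((A' -s B') +s sY *s (sY *s (ks *s U' -s kr *s V')))).
Proof.
  intros HA HA' HB HB' Hb.
  pose proof (pair_identity A A' B B' U U' V V' ks kr HA HA' HB HB') as Iden.
  set (W := sone -s sX *s (sY *s kr *s V *s V')) in Iden.
  set (Z := sone -s sX *s (sY *s ks *s U *s U')) in Iden.
  set (h := (A -s B) +s sX *s (sX *s (ks *s U -s kr *s V))) in *.
  set (h' := (A' -s B') +s sY *s (sY *s (ks *s U' -s kr *s V'))) in *.
  assert (HbW : (sY -s sX) *s Q *s W = sY *s A -s sX *s A').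
  { transitivity ((sY -s sX) *s Q -s sX *s sY *s (sY -s sX) *s (kr *s V *s V' *s Q));
      [unfold W; ring|]. rewrite Hb. ring. }
  assert (HaZ : (sY -s sX) *s Q = (sY *s B -s sX *s B') +s sX *s sY *s (sY -s sX) *s (ks *s U *s U' *s Q)
             <-> (sY -s sX) *s Q *s Z = sY *s B -s sX *s B').
  { unfold Z. split; intros H.
    - transitivity ((sY -s sX) *s Q -s sX *s sY *s (sY -s sX) *s (ks *s U *s U' *s Q)); [ring|].
      rewrite H. ring.
    - transitivity ((sY -s sX) *s Q *s (sone -s sX *s (sY *s ks *s U *s U'))
        +s sX *s sY *s (sY -s sX) *s (ks *s U *s U' *s Q)); [ring|]. rewrite H. ring. }
  rewrite HaZ. split; intros H.
  - transitivity (sY *s h -s sX *s h' +s sX *s h'); [ring|].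
    rewrite <- Iden, <- HbW, <- H. ring.
  - (* W is cancellable, and W ((Y - X) Q Z) = W (Y B - X B') by the identity. *)
    apply (cancel_1mX (sY *s kr *s V *s V')). fold W.
    transitivity ((sY *s A -s sX *s A') *s Z -s (sY *s B -s sX *s B') *s W
                  +s W *s (sY *s B -s sX *s B')); [rewrite <- HbW; ring|].
    rewrite Iden, H. ring.
Qed.

Definition pair_residual (A B U V ks kr : ser) : ser :=
  (A -s B) +s sX *s (sX *s (ks *s U -s kr *s V)).

(* When all data are series in X, the Y-versions are their swaps, and the
   coupling constants are symmetric, the "a"-equation becomes the statement that
   the residual is a multiple of X: this is the shape of (dH1c) and (dH2c). *)
Lemma pair_reduction (Q A B U V ks kr : ser) :
  xonly A -> xonly B -> xonly U -> xonly V -> xonly ks -> xonly kr ->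
  sswap ks = ks -> sswap kr = kr -> A *s U = sone -> B *s V = sone ->
  (sY -s sX) *s Q = (sY *s A -s sX *s sswap A)
                     +s sX *s sY *s (sY -s sX) *s (kr *s V *s sswap V *s Q) ->
  ((sY -s sX) *s Q = (sY *s B -s sX *s sswap B)
                      +s sX *s sY *s (sY -s sX) *s (ks *s U *s sswap U *s Q) <->
   pair_residual A B U V ks kr = sX *s sconst (pair_residual A B U V ks kr 1%nat O)).
Proof.
  intros HxA HxB HxU HxV Hxks Hxkr Hsks Hskr HA HB Hb.
  assert (Hswap_inv : forall P R, P *s R = sone -> sswap P *s sswap R = sone).
  { intros P R H. rewrite <- sswap_mul, H. fext. unfold sswap. destruct m, n; reflexivity. }
  rewrite (pair_equation_iff Q A (sswap A) B (sswap B) U (sswap U) V (sswap V) ks kr)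
    by auto.
  rewrite <- xonly_symmetric_iff.
  - unfold pair_residual. rewrite sswap_add, !sswap_sub, !sswap_mul, !sswap_sub, !sswap_mul,
      sswap_X, Hsks, Hskr. apply iff_refl.
  - unfold pair_residual.
    repeat (apply xonly_sub || apply xonly_add || apply xonly_mul || apply xonly_X); auto.
Qed.

(* The series are exponentials at one
   point: xs, xr = e^{-D(X) F_s}, e^{-D(X) F_r} (t-flows, variable X), ps, pr =
   e^{-Dbar(Y) F_s}, e^{-Dbar(Y) F_r} (tbar-flows, variable Y), cs, cr = e^{F_ss},
   e^{F_rr}, e = e^{F_rs}, and primes denote inverses.  Writing (dH3b) as
   Q W = Rb and (dH3a) as Q Z = L, the combination Rb Z - L W equals, up to the
   unit ps', X h2(Y) - Y e' h1(X) with h1, h2 the (dH1c)-, (dH2c)-residuals. *)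
Lemma mixed_identity (xs xs' xr xr' ps ps' pr pr' cs cr e e' : ser) :
  xs *s xs' = sone -> xr *s xr' = sone -> ps *s ps' = sone -> pr *s pr' = sone ->
  e *s e' = sone ->
  ps' *s ((sone -s sX *s (sY *s cs *s xs' *s ps)) *s (sX -s sY *s xs *s ps *s e')
          -s (sX *s pr *s ps -s sY *s xr *s ps *s e') *s (sone -s sX *s (sY *s cr *s xr' *s pr'))) =
  sX *s ((ps' -s pr) +s sY *s (sY *s (e' *s cs *s ps -s cr *s e' *s pr'))) -s
  sY *s e' *s ((xs -s xr) +s sX *s (sX *s (e *s cs *s xs' -s cr *s e *s xr'))).
Proof.
  intros Hxs Hxr Hps Hpr He.
  transitivity (
    sX *s ((ps' -s pr) +s sY *s (sY *s (e' *s cs *s ps -s cr *s e' *s pr'))) -s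
    sY *s e' *s ((xs -s xr) +s sX *s (sX *s (e *s cs *s xs' -s cr *s e *s xr')))
    -s sY *s xs *s e' *s (ps *s ps' -s sone)
    -s sX *s sX *s sY *s cs *s xs' *s ((ps *s ps' -s sone) -s (e' *s e -s sone))
    +s sX *s sY *s sY *s cs *s ps *s e' *s (xs' *s xs *s (ps *s ps' -s sone) +s (xs' *s xs -s sone))
    -s sX *s pr *s (ps *s ps' -s sone)
    +s sY *s xr *s e' *s (ps *s ps' -s sone)
    +s sX *s sX *s sY *s cr *s xr' *s
       (pr' *s pr *s (ps *s ps' -s sone) +s (pr' *s pr -s sone) -s (e' *s e -s sone))
    -s sX *s sY *s sY *s cr *s pr' *s e' *s
       (xr' *s xr *s (ps *s ps' -s sone) +s (xr' *s xr -s sone))); [ring|].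
  replace (xs' *s xs) with sone by (rewrite <- Hxs; ring).
  replace (e' *s e) with sone by (rewrite <- He; ring).
  replace (pr' *s pr) with sone by (rewrite <- Hpr; ring).
  replace (xr' *s xr) with sone by (rewrite <- Hxr; ring).
  rewrite Hps. ring.
Qed.

Lemma mixed_equation_iff (Q xs xs' xr xr' ps ps' pr pr' cs cs' cr e e' c1 c2 : ser) :
  xs *s xs' = sone -> xr *s xr' = sone -> ps *s ps' = sone -> pr *s pr' = sone ->
  cs *s cs' = sone -> e *s e' = sone ->
  (xs -s xr) +s sX *s (sX *s (e *s cs *s xs' -s cr *s e *s xr')) = sX *s c1 ->
  (ps' -s pr) +s sY *s (sY *s (e' *s cs *s ps -s cr *s e' *s pr')) = sY *s c2 ->
  Q = sone -s sX *s sY *s cs *s xs' *s ps +s sX *s sY *s cr *s xr' *s pr' *s Q ->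
  (sX *s Q = sX *s pr *s ps -s sY *s xr *s ps *s e' +s sY *s cs *s xs *s ps *s Q *s e' *s cs' <->
   sX *s (sY *s c2) = sX *s (sY *s (e' *s c1))).
Proof.
  intros Hxs Hxr Hps Hpr Hcs He H1 H2 Hb.
  pose proof (mixed_identity xs xs' xr xr' ps ps' pr pr' cs cr e e' Hxs Hxr Hps Hpr He) as Iden.
  rewrite H1, H2 in Iden.
  set (W := sone -s sX *s (sY *s cr *s xr' *s pr')) in Iden.
  set (Rb := sone -s sX *s (sY *s cs *s xs' *s ps)) in Iden.
  set (Z := sX -s sY *s xs *s ps *s e') in Iden.
  set (L := sX *s pr *s ps -s sY *s xr *s ps *s e') in Iden.
  assert (HbW : Q *s W = Rb).
  { transitivity (Q -s sX *s sY *s cr *s xr' *s pr' *s Q); [unfold W; ring|].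
    rewrite Hb at 1. unfold Rb. ring. }
  assert (HaZ : sX *s Q = L +s sY *s cs *s xs *s ps *s Q *s e' *s cs' <-> Q *s Z = L).
  { replace (sY *s cs *s xs *s ps *s Q *s e' *s cs') with (sY *s xs *s ps *s Q *s e')
      by (transitivity (sY *s xs *s ps *s Q *s e' *s (cs *s cs')); [rewrite Hcs|]; ring).
    unfold Z. split; intros H.
    - transitivity (sX *s Q -s sY *s xs *s ps *s Q *s e'); [ring|]. rewrite H. ring.
    - transitivity (Q *s (sX -s sY *s xs *s ps *s e') +s sY *s xs *s ps *s Q *s e'); [ring|].
      rewrite H. ring. }
  unfold L at 1 in HaZ. rewrite HaZ. split; intros H.
  - transitivity (ps' *s (Rb *s Z -s L *s W) +s sX *s (sY *s (e' *s c1))); [rewrite Iden; ring|].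
    rewrite <- HbW, <- H. ring.
  - (* W is cancellable, and Rb Z - L W = 0 because ps' is a unit. *)
    assert (D0 : Rb *s Z -s L *s W = szero).
    { transitivity (ps *s (ps' *s (Rb *s Z -s L *s W)) +s (sone -s ps *s ps') *s (Rb *s Z -s L *s W));
        [ring|].
      rewrite Iden, H, Hps. ring. }
    apply (cancel_1mX (sY *s cr *s xr' *s pr')). fold W.
    transitivity (Rb *s Z -s L *s W +s W *s L); [rewrite <- HbW; ring|].
    rewrite D0. ring.
Qed.

Lemma pair_residual_coef_X A B U V ks kr :
  pair_residual A B U V ks kr 1%nat O = A 1%nat O - B 1%nat O.
Proof. unfold pair_residual, sadd at 1. rewrite smul_X_l, smul_X_l. unfold ssub, sadd, sopp. ring. Qed.

Lemma ssub_sadd f g : f -s g = f +s sopp g.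
Proof. reflexivity. Qed.

Lemma sopp_sadd f g : sopp (f +s g) = sopp f +s sopp g.
Proof. fext. unfold sopp, sadd. ring. Qed.

Lemma sopp_sopp f : sopp (sopp f) = f.
Proof. fext. unfold sopp. ring. Qed.

Ltac expand_exp := repeat progress rewrite ?ssub_sadd, ?sopp_sadd, ?sopp_sopp, ?sexp_add.
Ltac expand_exp_in H := repeat progress rewrite ?ssub_sadd, ?sopp_sadd, ?sopp_sopp, ?sexp_add in H.
Ltac swap_in H := repeat progress rewrite ?sswap_add, ?sswap_sub, ?sswap_mul, ?sswap_exp,
  ?sswap_opp, ?sswap_DX, ?sswap_C, ?sswap_X, ?sswap_const in H.

Ltac ring_from H := match type of H with ?L = ?R =>
  transitivity L; [ring | transitivity R; [exact H | ring]] end.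
Ltac ring_iff := split; let H := fresh "H" in intro H; ring_from H.
Ltac iff_from L := match type of L with ?P <-> ?R =>
  transitivity P; [ring_iff | transitivity R; [exact L | ring_iff]] end.
Ltac xonly_auto := unfold C;
  repeat (apply xonly_sub || apply xonly_add || apply xonly_mul || apply xonly_exp
          || apply xonly_opp || apply xonly_X || apply xonly_const || apply xonly_inX).

Section AtOnePoint.
Variable j : jet.
Hypothesis Hsym : forall l1 l2, Permutation l1 l2 -> j l1 = j l2.

Lemma jsym a b : j (a :: b :: nil) = j (b :: a :: nil).
Proof. apply Hsym. constructor. Qed.

Lemma Csym : C j (vs :: vr :: nil) = C j (vr :: vs :: nil).
Proof. unfold C. rewrite jsym. reflexivity. Qed.

Lemma dH1a_iff_dH1c : dH1b j -> (dH1a j <-> dH1c j).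
Proof.
  unfold dH1a, dH1b, dH1c. rewrite Csym. intros Hb. expand_exp_in Hb. expand_exp.
  pose proof (pair_reduction (sexp (Dop2 j vt vt))
     (sexp (sopp (DX j vt (vs :: nil)))) (sexp (sopp (DX j vt (vr :: nil))))
     (sexp (DX j vt (vs :: nil))) (sexp (DX j vt (vr :: nil)))
     (sexp (C j (vs :: vs :: nil)) *s sexp (C j (vr :: vs :: nil)))
     (sexp (C j (vr :: vr :: nil)) *s sexp (C j (vr :: vs :: nil))))
    as L.
  rewrite pair_residual_coef_X, !sexp_coef_X in L. unfold pair_residual in L.
  swap_in L.
  specialize (L ltac:(xonly_auto) ltac:(xonly_auto) ltac:(xonly_auto) ltac:(xonly_auto)
                ltac:(xonly_auto) ltac:(xonly_auto) eq_refl eq_refl (sexp_inv' _) (sexp_inv' _)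
                ltac:(ring_from Hb)).
  match type of L with context [sconst ?v] =>
    replace v with (j (vr :: vt 0 :: nil) - j (vs :: vt 0 :: nil)) in L
      by (unfold sopp, DX, inX, Dop1; simpl; rewrite Ropp_0, exp_0, !(jsym (vt 0)); field) end.
  iff_from L.
Qed.

Lemma dH2a_iff_dH2c : dH2b j -> (dH2a j <-> dH2c j).
Proof.
  unfold dH2a, dH2b, dH2c. rewrite Csym. intros Hb. expand_exp_in Hb. expand_exp.
  pose proof (pair_reduction (sexp (Dop2 j vtb vtb))
     (sexp (DX j vtb (vs :: nil))) (sexp (sopp (DX j vtb (vr :: nil))))
     (sexp (sopp (DX j vtb (vs :: nil)))) (sexp (DX j vtb (vr :: nil)))
     (sexp (C j (vs :: vs :: nil)) *s sexp (sopp (C j (vr :: vs :: nil))))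
     (sexp (C j (vr :: vr :: nil)) *s sexp (sopp (C j (vr :: vs :: nil)))))
    as L.
  rewrite pair_residual_coef_X, !sexp_coef_X in L. unfold pair_residual in L.
  swap_in L.
  specialize (L ltac:(xonly_auto) ltac:(xonly_auto) ltac:(xonly_auto) ltac:(xonly_auto)
                ltac:(xonly_auto) ltac:(xonly_auto) eq_refl eq_refl (sexp_inv _) (sexp_inv' _)
                ltac:(ring_from Hb)).
  match type of L with context [sconst ?v] =>
    replace v with (j (vr :: vtb 0 :: nil) + j (vs :: vtb 0 :: nil)) in L
      by (unfold sopp, DX, inX, Dop1; simpl; rewrite Ropp_0, exp_0, !(jsym (vtb 0)); field) end.
  iff_from L.
Qed.

Lemma sexp_C_opp l : sexp (sopp (C j l)) = sconst (exp (- j l)).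
Proof. unfold C. rewrite <- sconst_opp. apply sexp_const. Qed.

Lemma dH3a_iff_dH3c : dH3b j -> dH1c j -> dH2c j -> (dH3a j <-> dH3c j).
Proof.
  unfold dH3a, dH3b, dH1c, dH2c, dH3c. rewrite !Csym. intros Hb H1 H2.
  expand_exp_in Hb. expand_exp_in H1. expand_exp_in H2. expand_exp.
  (* (dH2c) is used with the variable Y. *)
  pose proof (f_equal sswap H2) as H2Y. swap_in H2Y.
  pose proof (mixed_equation_iff (sexp (Dop2 j vt vtb))
    (sexp (sopp (DX j vt (vs :: nil)))) (sexp (DX j vt (vs :: nil)))
    (sexp (sopp (DX j vt (vr :: nil)))) (sexp (DX j vt (vr :: nil)))
    (sexp (sopp (DY j vtb (vs :: nil)))) (sexp (DY j vtb (vs :: nil)))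
    (sexp (sopp (DY j vtb (vr :: nil)))) (sexp (DY j vtb (vr :: nil)))
    (sexp (C j (vs :: vs :: nil))) (sexp (sopp (C j (vs :: vs :: nil))))
    (sexp (C j (vr :: vr :: nil))) (sexp (C j (vr :: vs :: nil))) (sexp (sopp (C j (vr :: vs :: nil))))
    (sconst (j (vr :: vt 0 :: nil) - j (vs :: vt 0 :: nil)))
    (sconst (j (vr :: vtb 0 :: nil) + j (vs :: vtb 0 :: nil)))
    (sexp_inv' _) (sexp_inv' _) (sexp_inv' _) (sexp_inv' _) (sexp_inv _) (sexp_inv _)
    ltac:(ring_from H1) ltac:(ring_from H2Y) ltac:(ring_from Hb)) as L.
  rewrite !sexp_C_opp, <- sconst_mul in L.
  (* XY c2 = XY e' c1 is (dH3c) after cancelling X and Y. *)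
  assert (Hc : sX *s (sY *s sconst (j (vr :: vtb 0 :: nil) + j (vs :: vtb 0 :: nil))) =
               sX *s (sY *s sconst (exp (- j (vr :: vs :: nil)) *
                                    (j (vr :: vt 0 :: nil) - j (vs :: vt 0 :: nil)))) <->
               dH3c j).
  { unfold dH3c. split; intros H.
    - apply cancel_X, cancel_Y in H. exact (f_equal (fun f => f O O) H).
    - rewrite H. reflexivity. }
  unfold dH3c in Hc. rewrite <- Hc, !sexp_C_opp. iff_from L.
Qed.

Lemma six_equations_iff :
  (dH1a j /\ dH1b j /\ dH2a j /\ dH2b j /\ dH3a j /\ dH3b j) <->
  (dH1b j /\ dH2b j /\ dH3b j /\ dH1c j /\ dH2c j /\ dH3c j).
Proof.
  pose proof dH1a_iff_dH1c. pose proof dH2a_iff_dH2c. pose proof dH3a_iff_dH3c. tauto.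
Qed.
End AtOnePoint.

Lemma jet_at_symmetric F D x : is_derivative_family F D ->
  forall l1 l2, Permutation l1 l2 -> jet_at D x l1 = jet_at D x l2.
Proof. intros [_ [_ Hperm]] l1 l2 P. unfold jet_at. rewrite (Hperm l1 l2 P). reflexivity. Qed.

Theorem corollary4 (F : point -> R) (D : list var -> point -> R)
  (HD : is_derivative_family F D) :
  (forall x : point,
     dH1a (jet_at D x) /\ dH1b (jet_at D x) /\ dH2a (jet_at D x) /\
     dH2b (jet_at D x) /\ dH3a (jet_at D x) /\ dH3b (jet_at D x))
  <->
  (forall x : point,
     dH1b (jet_at D x) /\ dH2b (jet_at D x) /\ dH3b (jet_at D x) /\
     dH1c (jet_at D x) /\ dH2c (jet_at D x) /\ dH3c (jet_at D x)).
Proof.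
  split; intros H x; apply (six_equations_iff _ (jet_at_symmetric F D x HD)); apply H.
Qed.
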